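(* Let $N\ge1$ and consider linear subsystems $\Sigma_1,\dots,\Sigma_N$ and their interconnection $\Sigma$ as described in the context, with safe sets $X_i$, input sets $U_i$, $X=\prod_i X_i$, $U=\prod_i U_i$. For each $i\in[1;N]$ let $\delta_i\ge 0$ and let $C_i^{\delta_i}:\mathbb{R}^{n_i}\rightrightarrows U_i+\delta_i\mathbb{B}$ be a $\delta_i$-relaxed safety controller for $\Sigma_i$ and the relaxed safe set $X_i+\delta_i\mathbb{B}$. Let $X^{\delta}=\prod_{i=1}^N(X_i+\delta_i\mathbb{B})$, $U^{\delta}=\prod_{i=1}^N(U_i+\delta_i\mathbb{B})$, and define $C^{\delta}:\mathbb{R}^n\rightrightarrows U^{\delta}$ by $C^\delta(x)=\emptyset$ for $x\in\mathbb{R}^n\setminus X^\delta$ and, for $x=[x_1;\dots;x_N]\in X^{\delta}$, $$C^{\delta}(x)=\{u=[u_1;\dots;u_N]\in U^{\delta}\mid u_i\in C_i^{\delta_i}(x_i)\ \text{for all } i\in[1;N]\}.$$ Then, with $\delta=\|[\delta_1;\dots;\delta_N]\|$ (infinity norm), $C^{\delta}$ is a $\delta$-relaxed safety controller for the interconnected system $\Sigma$, the relaxed safe set $X+\delta\mathbb{B}$ and the relaxed input set $U+\delta\mathbb{B}$.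
   Context: $\mathbb{B}$ denotes the closed unit ball w.r.t. the infinity norm in the Euclidean space of the appropriate dimension; $+$ between sets is the Minkowski sum, and $a+S=\{a\}+S$. Subsystem $\Sigma_i$ is linear: $x_i(t+1)=A_ix_i(t)+B_iu_i(t)+D_iz_i(t)+w_i(t)$ with $A_i\in\mathbb{R}^{n_i\times n_i}$, $B_i\in\mathbb{R}^{n_i\times m_i}$, $D_i\in\mathbb{R}^{n_i\times p_i}$, $w_i(t)\in W_i\subseteq\mathbb{R}^{n_i}$ (compact disturbance set), and internal input $z_i=[z_{i1};\dots;z_{i(i-1)};z_{i(i+1)};\dots;z_{iN}]\in\mathbb{R}^{p_i}$, $z_{ij}\in\mathbb{R}^{p_{ij}}$; its outputs are $h_{ij}(x_i)=H_{ij}x_i$ with matrices $H_{ij}\in\mathbb{R}^{p_{ji}\times n_i}$ for $j\ne i$. The interconnected system $\Sigma$ has state $x=[x_1;\dots;x_N]\in\mathbb{R}^n$, input $u=[u_1;\dots;u_N]\in\mathbb{R}^m$, disturbance $w\in W=\prod_i W_i$, and transition $f(x,u,w)=[A_1x_1+B_1u_1+D_1z_1+w_1;\dots;A_Nx_N+B_Nu_N+D_Nz_N+w_N]$ with $z_{ij}=H_{ji}x_j$. $X_i\subseteq\mathbb{R}^{n_i}$ and $U_i\subseteq\mathbb{R}^{m_i}$ are compact. For $i\ne j$ there are compact sets $Z_{ij}\subseteq\mathbb{R}^{p_{ij}}$ with $H_{ji}(X_j+\delta_j\mathbb{B})\subseteq Z_{ij}$, and $Z_i=\prod_{j\ne i}Z_{ij}$.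 A $\delta_i$-relaxed safety controller for $\Sigma_i$ and $X_i+\delta_i\mathbb{B}$ is a set-valued map $C_i:\mathbb{R}^{n_i}\rightrightarrows U_i+\delta_i\mathbb{B}$ with (1) $C_i(x_i)\subseteq U_i+\delta_i\mathbb{B}$ for all $x_i$; (2) $\mathrm{dom}(C_i)=\{x_i\mid C_i(x_i)\ne\emptyset\}\subseteq X_i+\delta_i\mathbb{B}$; (3) for all $x_i\in\mathrm{dom}(C_i)$ and $u_i\in C_i(x_i)$: $A_ix_i+B_iu_i+D_iZ_i+W_i\subseteq\mathrm{dom}(C_i)$. A $\delta$-relaxed safety controller for $\Sigma$, $X+\delta\mathbb{B}$ and $U+\delta\mathbb{B}$ is a set-valued map $C:\mathbb{R}^n\rightrightarrows U+\delta\mathbb{B}$ with (1) $C(x)\subseteq U+\delta\mathbb{B}$ for all $x$; (2) $\mathrm{dom}(C)\subseteq X+\delta\mathbb{B}$; (3) for all $x\in\mathrm{dom}(C)$, $u\in C(x)$, $w\in W$: $f(x,u,w)\in\mathrm{dom}(C)$. *)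

(* Vectors of R^k are column vectors
   'cV[R]_k; the normed-module structure of matrices in MathComp-Analysis
   (matrix_normedtype.v) uses mx_norm = max of |entries|, i.e. the infinity
   norm, so `|v| below is the infinity norm of the paper. *)
From HB Require Import structures.
From mathcomp Require Import all_boot all_order all_algebra.
From mathcomp Require Import all_classical all_reals all_analysis.

Set Implicit Arguments.
Unset Strict Implicit.
Unset Printing Implicit Defensive.

Import Order.TTheory GRing.Theory Num.Theory.
Import numFieldNormedType.Exports.
Local Open Scope classical_set_scope.
Local Open Scope ring_scope.

Section Defs.
Variable R : realType.

Definition unitB (k : nat) : set 'cV[R]_k := [set v | `|v| <= 1].

Definition sscale (k : nat) (c : R) (S : set 'cV[R]_k) : set 'cV[R]_k :=
  [set c *: v | v in S].
Definition msum (k : nat) (S T : set 'cV[R]_k) : set 'cV[R]_k :=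
  [set s + t | s in S & t in T].

Definition relax (k : nat) (X : set 'cV[R]_k) (d : R) : set 'cV[R]_k :=
  msum X (sscale d (@unitB k)).

(* A vector x = [x_1; ...; x_N] of R^n, n = n_1 + ... + n_N, is represented
   by its family of blocks x_i in R^{n_i}. *)
Definition gvec (N : nat) (d : 'I_N -> nat) := forall i : 'I_N, 'cV[R]_(d i).

Definition gadd (N : nat) (d : 'I_N -> nat) (x y : gvec d) : gvec d :=
  fun i => x i + y i.
Definition gscale (N : nat) (d : 'I_N -> nat) (c : R) (x : gvec d) : gvec d :=
  fun i => c *: x i.

(* infinity norm of the stacked vector = max over blocks of the block
   infinity norms *)
Definition gnorm (N : nat) (d : 'I_N -> nat) (x : gvec d) : R :=
  \big[Num.max/0]_(i < N) `|x i|.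

Definition gunitB (N : nat) (d : 'I_N -> nat) : set (gvec d) :=
  [set v | gnorm v <= 1].
Definition gsscale (N : nat) (d : 'I_N -> nat) (c : R) (S : set (gvec d)) :
  set (gvec d) := [set gscale c v | v in S].
Definition gmsum (N : nat) (d : 'I_N -> nat) (S T : set (gvec d)) :
  set (gvec d) := [set gadd s t | s in S & t in T].
Definition grelax (N : nat) (d : 'I_N -> nat) (S : set (gvec d)) (e : R) :
  set (gvec d) := gmsum S (gsscale e (@gunitB N d)).

Definition gprod (N : nat) (d : 'I_N -> nat) (S : forall i : 'I_N, set 'cV[R]_(d i)) :
  set (gvec d) := [set x | forall i, S i (x i)].

Definition vnorm_inf (N : nat) (delta : 'I_N -> R) : R :=
  \big[Num.max/0]_(i < N) `|delta i|.

(* [Post x u] is the set of possible successors of state x under input u.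
   C is a set-valued map C : S ⇉ Us with
   (1) C x ⊆ Us, (2) dom C ⊆ Xs, (3) successors stay in dom C. *)
Definition cdom {S I : Type} (C : S -> set I) : set S := [set x | C x !=set0].

Definition relaxed_safety_controller {S I : Type} (Post : S -> I -> set S)
  (Xs : set S) (Us : set I) (C : S -> set I) : Prop :=
  [/\ (forall x, C x `<=` Us),
      cdom C `<=` Xs &
      (forall x u, cdom C x -> C x u -> Post x u `<=` cdom C)].

Unset Implicit Arguments.
Section System.
Variables (N : nat) (n m : 'I_N -> nat) (p : 'I_N -> 'I_N -> nat).
(* p i j = p_{ij}, dimension of the internal input z_{ij} of subsystem i *)
Variables (A : forall i, 'M[R]_(n i)) (B : forall i, 'M[R]_(n i, m i))
          (D : forall i j, 'M[R]_(n i, p i j))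
          (H : forall i j, 'M[R]_(p j i, n i)).
(* D i j is the block column of D_i acting on z_{ij}, i.e.
   D_i z_i = sum_{j <> i} D i j z_{ij};  H i j = H_{ij} : R^{n_i} -> R^{p_{ji}}. *)

Definition DZ (Z : forall i j, set 'cV[R]_(p i j)) (i : 'I_N) : set 'cV[R]_(n i) :=
  [set v | exists z : forall j, 'cV[R]_(p i j),
     (forall j, j != i -> Z i j (z j)) /\ v = \sum_(j < N | j != i) D i j *m z j].

Definition local_post (Z : forall i j, set 'cV[R]_(p i j))
  (W : forall i, set 'cV[R]_(n i)) (i : 'I_N)
  (xi : 'cV[R]_(n i)) (ui : 'cV[R]_(m i)) : set 'cV[R]_(n i) :=
  [set A i *m xi + B i *m ui + dz + w | dz in DZ Z i & w in W i].

(* transition map f of the interconnected system, z_{ij} = H_{ji} x_j *)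
Definition f_int (x : gvec n) (u : gvec m) (w : gvec n) : gvec n :=
  fun i => A i *m x i + B i *m u i
           + \sum_(j < N | j != i) D i j *m (H j i *m x j) + w i.

Definition global_post (W : forall i, set 'cV[R]_(n i)) (x : gvec n) (u : gvec m) :
  set (gvec n) := [set f_int x u w | w in gprod W].

End System.
End Defs.

Arguments DZ {R N n p} D Z i.
Arguments local_post {R N n m p} A B D Z W i xi ui.
Arguments f_int {R N n m p} A B D H x u w.
Arguments global_post {R N n m p} A B D H W x u.

(* Each local controller keeps its own block inside its relaxed safe set, whatever
   the neighbours do, because the neighbours' outputs H_{ji} x_j stay in the
   over-approximations Z_{ij}; so the blockwise product of the local controllers
   is a safety controller for the product of the local relaxed sets.  It remains to
   note that a product of relaxations X_i + delta_i B is contained in the single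
   relaxation X + delta B, since the infinity norm of a stacked vector is the
   maximum of the block norms. *)
From HB Require Import structures.
From mathcomp Require Import all_boot all_order all_algebra.
From mathcomp Require Import all_classical all_reals all_analysis.
Import Order.TTheory GRing.Theory Num.Theory.
Import numFieldNormedType.Exports.
Local Open Scope classical_set_scope.
Local Open Scope ring_scope.

Lemma dep_choice (I : Type) (T : I -> Type) (P : forall i, T i -> Prop) :
  (forall i, exists t, P i t) -> exists f : forall i, T i, forall i, P i (f i).
Proof.
move=> exP; exists (fun i => projT1 (cid (exP i))) => i.
exact: projT2 (cid (exP i)).
Qed.

Section Relaxation.
Context {R : realType} {N : nat}.

Lemma le_vnorm_inf (delta : 'I_N -> R) i : `|delta i| <= vnorm_inf delta.
Proof. exact: (le_bigmax _ (fun j => `|delta j|) i). Qed.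

Lemma le_relax (k : nat) (S : set 'cV[R]_k) (e e' : R) :
  0 <= e -> e <= e' -> relax S e `<=` relax S e'.
Proof.
move=> e_ge0 le_ee'.
have [e'0|e'_neq0] := eqVneq e' 0.
  by have -> : e = e' by apply/eqP; rewrite eq_le le_ee' e'0 e_ge0.
move=> _ [s Ss [_ [v v_le1 <-] <-]].
have e'_ge0 : 0 <= e' := le_trans e_ge0 le_ee'.
have e'_gt0 : 0 < e' by rewrite lt0r e'_neq0.
exists s => //; exists (e' *: ((e / e') *: v)).
  exists ((e / e') *: v) => //; rewrite /unitB /= normrZ -[1]mul1r.
  by apply: ler_pM => //; rewrite ger0_norm ?divr_ge0 // ler_pdivrMr ?mul1r.
by rewrite scalerA mulrCA divff // mulr1.
Qed.

Lemma gprod_relax {d : 'I_N -> nat} (S : forall i, set 'cV[R]_(d i)) (e : R) :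
  gprod (fun i => relax (S i) e) `<=` grelax (gprod S) e.
Proof.
move=> x x_relax.
have /dep_choice[sv sv_spec] : forall i, exists sv : 'cV[R]_(d i) * 'cV[R]_(d i),
    [/\ S i sv.1, `|sv.2| <= 1 & sv.1 + e *: sv.2 = x i].
  by move=> i; have [si Ssi [_ [v v_le1 <-] <-]] := x_relax i; exists (si, v).
exists (fun i => (sv i).1); first by move=> i; have [] := sv_spec i.
exists (gscale e (fun i => (sv i).2)); last first.
  by apply: functional_extensionality_dep => i; have [] := sv_spec i.
exists (fun i => (sv i).2) => //.
by apply: bigmax_le => // i _; have [] := sv_spec i.
Qed.

Lemma gprod_relax_vnorm_inf {d : 'I_N -> nat} (S : forall i, set 'cV[R]_(d i))
    {delta : 'I_N -> R} :
  (forall i, 0 <= delta i) ->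
  gprod (fun i => relax (S i) (delta i)) `<=` grelax (gprod S) (vnorm_inf delta).
Proof.
move=> delta_ge0 x x_relax; apply: gprod_relax => i.
apply: le_relax (x_relax i) => //.
by rewrite -[delta i]ger0_norm ?le_vnorm_inf.
Qed.

End Relaxation.

Lemma relaxed_safety_controller_weaken {S I : Type} {Post : S -> I -> set S}
    {Xs Xs' : set S} {Us Us' : set I} {C : S -> set I} :
  Xs `<=` Xs' -> Us `<=` Us' ->
  relaxed_safety_controller Post Xs Us C ->
  relaxed_safety_controller Post Xs' Us' C.
Proof.
move=> sub_X sub_U [C_sub dom_sub inv]; split=> //.
- by move=> x u /C_sub/sub_U.
- by move=> x /dom_sub/sub_X.
Qed.

Section ProductController.
Context {R : realType} {N : nat} {n m : 'I_N -> nat}.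
Variables (Post : forall i, 'cV[R]_(n i) -> 'cV[R]_(m i) -> set 'cV[R]_(n i))
          (Xs : forall i, set 'cV[R]_(n i)) (Us : forall i, set 'cV[R]_(m i))
          (C : forall i, 'cV[R]_(n i) -> set 'cV[R]_(m i)).

Definition prod_controller (x : gvec R n) : set (gvec R m) :=
  [set u | gprod Xs x /\ gprod Us u /\ forall i, C i (x i) (u i)].

Lemma prod_controller_safe (gPost : gvec R n -> gvec R m -> set (gvec R n)) :
  (forall i, relaxed_safety_controller (Post i) (Xs i) (Us i) (C i)) ->
  (forall x u y, gprod Xs x -> gPost x u y -> forall i, Post i (x i) (u i) (y i)) ->
  relaxed_safety_controller gPost (gprod Xs) (gprod Us) prod_controller.
Proof.
move=> local_safe gPost_blocks; split.
- by move=> x u [_ []].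
- by move=> x [u []].
move=> x u _ [Xx [_ Cxu]] y y_post.
have y_dom i : cdom (C i) (y i).
  have [_ _ inv] := local_safe i.
  by apply: inv (Cxu i) _ (gPost_blocks _ _ _ Xx y_post i); exists (u i).
have /dep_choice[u' Cyu'] : forall i, exists ui, C i (y i) ui by [].
exists u'; split; [|split] => // i.
- by have [_ dom_sub _] := local_safe i; apply: dom_sub; exists (u' i).
- by have [C_sub _ _] := local_safe i; apply: C_sub (Cyu' i).
Qed.

End ProductController.

Arguments prod_controller_safe {R N n m Post Xs Us C gPost}.

Lemma f_int_local_post (R : realType) (N : nat) (n m : 'I_N -> nat)
    (p : 'I_N -> 'I_N -> nat)
    (A : forall i, 'M[R]_(n i)) (B : forall i, 'M[R]_(n i, m i))
    (D : forall i j, 'M[R]_(n i, p i j)) (H : forall i j, 'M[R]_(p j i, n i))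
    (W : forall i, set 'cV[R]_(n i)) (Z : forall i j, set 'cV[R]_(p i j))
    (x : gvec R n) (u : gvec R m) (w : gvec R n) (i : 'I_N) :
  (forall j, j != i -> Z i j (H j i *m x j)) -> W i (w i) ->
  local_post A B D Z W i (x i) (u i) (f_int A B D H x u w i).
Proof.
move=> Zx Ww; exists (\sum_(j < N | j != i) D i j *m (H j i *m x j)).
  by exists (fun j => H j i *m x j).
by exists (w i).
Qed.

Theorem theorem3 (R : realType) (N : nat) (hN : (1 <= N)%N)
  (n m : 'I_N -> nat) (p : 'I_N -> 'I_N -> nat)
  (A : forall i, 'M[R]_(n i)) (B : forall i, 'M[R]_(n i, m i))
  (D : forall i j, 'M[R]_(n i, p i j)) (H : forall i j, 'M[R]_(p j i, n i))
  (X : forall i, set 'cV[R]_(n i)) (U : forall i, set 'cV[R]_(m i))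
  (W : forall i, set 'cV[R]_(n i)) (Z : forall i j, set 'cV[R]_(p i j))
  (delta : 'I_N -> R)
  (C : forall i, 'cV[R]_(n i) -> set 'cV[R]_(m i)) :
  (forall i, compact (X i)) ->
  (forall i, compact (U i)) ->
  (forall i, compact (W i)) ->
  (forall i j, j != i -> compact (Z i j)) ->
  (forall i j, j != i ->
     [set H j i *m v | v in relax (X j) (delta j)] `<=` Z i j) ->
  (forall i, 0 <= delta i) ->
  (forall i, relaxed_safety_controller (local_post A B D Z W i)
               (relax (X i) (delta i)) (relax (U i) (delta i)) (C i)) ->
  let Xd := gprod (fun i => relax (X i) (delta i)) in
  let Ud := gprod (fun i => relax (U i) (delta i)) in
  let Cd := fun (x : gvec R n) =>
              [set u : gvec R m | Xd x /\ Ud u /\ forall i, C i (x i) (u i)] in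
  let d := vnorm_inf delta in
  relaxed_safety_controller (global_post A B D H W)
    (grelax (gprod X) d) (grelax (gprod U) d) Cd.
Proof.
move=> _ _ _ _ HZ delta_ge0 local_safe Xd Ud Cd d.
apply: (relaxed_safety_controller_weaken
  (gprod_relax_vnorm_inf X delta_ge0) (gprod_relax_vnorm_inf U delta_ge0)).
apply: (prod_controller_safe local_safe) => x u y Xx [w Ww <-] i.
apply: f_int_local_post (Ww i) => j ji.
by apply: (HZ i j ji); exists (x j); first exact: Xx.
Qed.
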